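(* Consider the semi-discrete finite volume scheme with Lax–Friedrichs flux for the multicomponent compressible Euler system described in the context. Assume $\rho_{i,K}(0)>0$ for all cells $K\in\mathcal{T}_h$ and all $i=1,\dots,\mathrm{n}$, and assume that the discrete velocity satisfies $\mathbf{u}_h=\mathbf{m}_h/\rho_h\in L^2(0,T;L^\infty(\Omega))$. Then there is a constant $\bar\rho_h>0$ such that the numerical solution satisfies \[ \rho_{i,K}(t)\ge \bar\rho_h>0\qquad\text{for all }K\in\mathcal{T}_h,\ t\in[0,T],\ i=1,\dots,\mathrm{n}. \]
   Context: Domain: $\Omega=([0,1]|_{\{0,1\}})^N$, $N\in\{1,2,3\}$ (flat torus, periodic). Multicomponent Euler system for $\mathrm{n}$ species: unknowns partial densities $\rho_i$, momentum $\mathbf{m}=\rho\mathbf{u}$, total energy $\mathcal{E}$, with $\rho=\sum_{i=1}^{\mathrm{n}}\rho_i$: $\partial_t\rho_i+\nabla\cdot(\rho_i\mathbf{u})=0$, $\partial_t\mathbf{m}+\nabla\cdot(\rho\mathbf{u}\otimes\mathbf{u}+p\mathbb{I})=0$, $\partial_t\mathcal{E}+\nabla\cdot((\mathcal{E}+p)\mathbf{u})=0$. Write $\mathbf{U}=(\rho_1,\dots,\rho_{\mathrm{n}},\mathbf{m},\mathcal{E})$ and $\mathbf{f}(\mathbf{U})=(\rho_1\mathbf{u},\dots,\rho_{\mathrm{n}}\mathbf{u},\rho\mathbf{u}\otimes\mathbf{u}+p\mathbb{I},(\mathcal{E}+p)\mathbf{u})$. Closure: $p=\sum_i\rho_i r_i\mathbb{T}$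 with constants $r_i>0$, and $\mathcal{E}=\sum_i\rho_i(e_{0i}+c_{vi}\mathbb{T})+\frac12\rho|\mathbf{u}|^2$ with constants $e_{0i}$, $c_{vi}>0$; $c_{pi}=c_{vi}+r_i$. Scheme: uniform Cartesian mesh $\mathcal{T}_h$ of $\Omega$ with mesh size $h$, cells $K$ with $|K|=h^N$, interfaces $S_{KL}=\partial K\cap\partial L$ with $|S_{KL}|=h^{N-1}$, unit normal $\mathbf{n}_{KL}$ from $K$ to $L$, $\mathcal{N}(K)$ the set of cells sharing a face with $K$. The piecewise constant solution $\mathbf{U}_h(t)$ has value $\mathbf{U}_K(t)$ on $K$, $\mathbf{U}_K(0)$ is the cell average of the initial data, and $|K|\frac{d}{dt}\mathbf{U}_K+\sum_{L\in\mathcal{N}(K)}|S_{KL}|\mathbf{F}_{KL}=0$, with $\mathbf{F}_{KL}=\frac{\mathbf{f}(\mathbf{U}_K)+\mathbf{f}(\mathbf{U}_L)}{2}\cdot\mathbf{n}_{KL}-\frac{\lambda_{KL}}{2}(\mathbf{U}_L-\mathbf{U}_K)$, $\lambda_{KL}=\max(|\mathbf{u}_K|+c_{\rm mix}(\mathbf{U}_K),|\mathbf{u}_L|+c_{\rm mix}(\mathbf{U}_L))$, $\mathbf{u}_K=\mathbf{m}_K/\rho_K$, $c_{\rm mix}^2=\gamma_{\rm mix}p/\rho$, $\gamma_{\rm mix}=\sum_i\rho_ic_{pi}/\sum_i\rho_ic_{vi}$. The global bound $\lambda=\max_K(|\mathbf{u}_K|+c_{\rm mix}(\mathbf{U}_K))\ge\lambda_{KL}$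 may be used as the viscosity coefficient. $\rho_{i,K}(t)$ denotes the $\rho_i$-component of $\mathbf{U}_K(t)$. *)

From HB Require Import structures.
From mathcomp Require Import all_boot all_order all_algebra.
From mathcomp Require Import all_classical all_reals all_analysis.
Set Implicit Arguments.
Unset Strict Implicit.
Unset Printing Implicit Defensive.
Import Order.TTheory GRing.Theory Num.Theory numFieldNormedType.Exports.
Local Open Scope classical_set_scope.
Local Open Scope ring_scope.

(* Conventions: division by 0 is 0 (MathComp), Num.sqrt of a negative is 0. *)

Section EulerState.
Variables (R : realType) (n N : nat).

Record state := State { srho : 'I_n -> R; smom : 'I_N -> R; sE : R }.

Definition rho_tot (U : state) : R := \sum_(i < n) srho U i.
Definition vel (U : state) (d : 'I_N) : R := smom U d / rho_tot U.
Definition vnorm (U : state) : R := Num.sqrt (\sum_(d < N) vel U d ^+ 2).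

Variables (r cv e0 : 'I_n -> R).

(* temperature from E = sum_i rho_i (e0_i + cv_i T) + 1/2 rho |u|^2 *)
Definition temp (U : state) : R :=
  (sE U - \sum_(i < n) srho U i * e0 i - 2^-1 * rho_tot U * vnorm U ^+ 2)
  / (\sum_(i < n) srho U i * cv i).
Definition pres (U : state) : R := \sum_(i < n) srho U i * r i * temp U.
(* gamma_mix = sum rho_i cp_i / sum rho_i cv_i, cp_i = cv_i + r_i *)
Definition gamma_mix (U : state) : R :=
  (\sum_(i < n) srho U i * (cv i + r i)) / (\sum_(i < n) srho U i * cv i).
Definition c_mix (U : state) : R := Num.sqrt (gamma_mix U * pres U / rho_tot U).
Definition wspeed (U : state) : R := vnorm U + c_mix U.

(* physical flux f(U) . e_d, componentwise *)
Definition frho (U : state) (d : 'I_N) (i : 'I_n) : R := srho U i * vel U d.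
Definition fmom (U : state) (d : 'I_N) (j : 'I_N) : R :=
  rho_tot U * vel U j * vel U d + (if j == d then pres U else 0).
Definition fE (U : state) (d : 'I_N) : R := (sE U + pres U) * vel U d.

Definition lamKL (UK UL : state) : R := Num.max (wspeed UK) (wspeed UL).

(* orientation of the unit normal n_KL = sgn s * e_d *)
Definition sgn (s : bool) : R := if s then 1 else -1.

Definition Frho (UK UL : state) (d : 'I_N) (s : bool) (i : 'I_n) : R :=
  sgn s * (frho UK d i + frho UL d i) / 2 - lamKL UK UL / 2 * (srho UL i - srho UK i).
Definition Fmom (UK UL : state) (d : 'I_N) (s : bool) (j : 'I_N) : R :=
  sgn s * (fmom UK d j + fmom UL d j) / 2 - lamKL UK UL / 2 * (smom UL j - smom UK j).
Definition FE (UK UL : state) (d : 'I_N) (s : bool) : R :=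
  sgn s * (fE UK d + fE UL d) / 2 - lamKL UK UL / 2 * (sE UL - sE UK).

End EulerState.

Section Mesh.
Variables (M N : nat).
(* uniform Cartesian mesh of the torus with M cells per direction, h = 1/M;
   a cell is indexed by its N integer coordinates in 'I_M *)
Definition cell := {ffun 'I_N -> 'I_M}.

Definition shift (s : bool) (k : 'I_M) : 'I_M :=
  insubd k (if s then k.+1 %% M else (k + M.-1) %% M)%N.

Definition nbr (K : cell) (d : 'I_N) (s : bool) : cell :=
  [ffun j => if j == d then shift s (K j) else K j].
End Mesh.

Section Scheme.
Variables (R : realType) (n N M : nat) (r cv e0 : 'I_n -> R).
Local Notation st := (state R n N).

Definition hmesh : R := (M%:R)^-1.

(* U is a solution on [0,T] of the semi-discrete LF finite volume scheme
   |K| dU_K/dt + sum_{L in N(K)} |S_KL| F_KL = 0, |K| = h^N, |S_KL| = h^(N-1);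
   the faces of K are indexed by (d, s) : 'I_N * bool. *)
Definition LF_solution (T : R) (U : cell M N -> R -> st) : Prop :=
  (forall K,
     (forall i, {within `[0, T]%classic, continuous (fun t : R => srho (U K t) i)}) /\
     (forall j, {within `[0, T]%classic, continuous (fun t : R => smom (U K t) j)}) /\
     {within `[0, T]%classic, continuous (fun t : R => sE (U K t))}) /\
  (forall K t, 0 < t < T ->
     (forall i,
        derivable (fun t : R => srho (U K t) i) t 1 /\
        hmesh ^+ N * derive1 (fun t : R => srho (U K t) i) t
        + \sum_(d < N) \sum_(s : bool)
            hmesh ^+ N.-1 * Frho r cv e0 (U K t) (U (nbr K d s) t) d s i = 0) /\
     (forall j,
        derivable (fun t : R => smom (U K t) j) t 1 /\
        hmesh ^+ N * derive1 (fun t : R => smom (U K t) j) t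
        + \sum_(d < N) \sum_(s : bool)
            hmesh ^+ N.-1 * Fmom r cv e0 (U K t) (U (nbr K d s) t) d s j = 0) /\
     (derivable (fun t : R => sE (U K t)) t 1 /\
        hmesh ^+ N * derive1 (fun t : R => sE (U K t)) t
        + \sum_(d < N) \sum_(s : bool)
            hmesh ^+ N.-1 * FE r cv e0 (U K t) (U (nbr K d s) t) d s = 0)).

(* ||u_h(t)||_{L^infty(Omega)} = max_K |u_K(t)| (u_h is piecewise constant) *)
Definition uinf (U : cell M N -> R -> st) (t : R) : R :=
  \big[Num.max/0]_(K : cell M N) vnorm (U K t).
End Scheme.

Definition I0T (R : realType) (T : R) : set R := `[0, T]%classic.

Definition L2_0T (R : realType) (T : R) (f : R -> R) : Prop :=
  measurable_fun (I0T T) f /\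
  (\int[@lebesgue_measure R]_(t in I0T T) ((f t) ^+ 2)%:E < +oo)%E.

(* Every partial density stays above the barrier
     beta(t) = m0 exp(-(1 + t) - c \int_0^t |u_h|_oo),
   where m0 is the least initial density and c = 2N/h.  At a time where some
   rho_{i,K} touches beta while all densities are still above it, rho_{i,K} is
   the smallest of the rho_{i,L}; since lambda_KL >= |u_L|, each Lax-Friedrichs
   flux out of K is then at most rho_{i,K} |u_h|_oo, hence
   rho_{i,K}' >= -c |u_h|_oo rho_{i,K}, whereas beta decays strictly faster.
   A real induction over [0, T] (continuity to the left, this comparison to the
   right) gives rho_{i,K} >= beta(T) > 0.  The L^2 hypothesis on u_h only
   serves to make its integral finite. *)

From HB Require Import structures.
From mathcomp Require Import all_boot all_order all_algebra.
From mathcomp Require Import all_classical all_reals all_analysis.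
From mathcomp Require Import measurable_realfun.
From mathcomp Require Import ring lra.
Import Order.TTheory GRing.Theory Num.Theory numFieldNormedType.Exports.
Set Implicit Arguments.
Unset Strict Implicit.
Local Open Scope classical_set_scope.
Local Open Scope ring_scope.

Section real_line.
Variable R : realType.
Implicit Types (t : R) (P : R -> Prop).

Lemma near_at_right_shift t P :
  (\forall x \near t^'+, P x) -> \forall h \near 0^'+, P (t + h).
Proof.
rewrite !near_withinE => /(nbhs0P (fun x => t < x -> P x) t).
by apply: filterS => h Ph h0; apply: Ph; rewrite ltrDl.
Qed.

Lemma near_itvoc_right t P :
  (\forall x \near t, P x) -> \forall h \near 0^'+, {in `]t, t + h], forall x, P x}.
Proof.
move=> /nbhs_ballP[e /= e0 tP]; near=> h => x; rewrite in_itv /= => /andP[tx xth].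
apply: tP; rewrite /ball /= ltr0_norm ?subr_lt0 // opprB ltrBlDl.
apply: le_lt_trans xth _; rewrite ltrD2l; near: h; exact: nbhs_right_lt.
Unshelve. all: by end_near. Qed.

Lemma near_at_right_ball P :
  (\forall h \near 0^'+, P h) -> exists2 e, 0 < e & forall h, 0 < h < e -> P h.
Proof.
rewrite near_withinE => /nbhs_ballP[e /= e0 eP]; exists e => // h /andP[h0 he].
by apply: eP => //; rewrite /ball /= sub0r normrN gtr0_norm.
Qed.

Lemma continuous_within_itv_at_right (a b t : R) (g : R -> R) :
  {within `[a, b], continuous g} -> a <= t < b -> g @ t^'+ --> g t.
Proof.
move=> + /andP[a_le_t t_lt_b].
move=> /(continuous_within_itvP _ (le_lt_trans a_le_t t_lt_b))[gi ga _].
have [<-//|a_neq_t] := eqVneq a t.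
by apply: cvg_at_right_filter; apply: gi; rewrite in_itv /= lt_neqAle a_neq_t a_le_t.
Qed.

Lemma continuous_within_itv_at_left (a b t : R) (g : R -> R) :
  {within `[a, b], continuous g} -> a < t <= b -> g @ t^'- --> g t.
Proof.
move=> + /andP[a_lt_t t_le_b].
move=> /(continuous_within_itvP _ (lt_le_trans a_lt_t t_le_b))[gi _ gb].
have [->//|t_neq_b] := eqVneq t b.
by apply: cvg_at_left_filter; apply: gi; rewrite in_itv /= a_lt_t lt_neqAle t_neq_b.
Qed.

Lemma real_induction (T : R) (P : R -> Prop) :
  P 0 ->
  (forall t, 0 <= t < T -> P t -> \forall h \near 0^'+, P (t + h)) ->
  (forall t, 0 < t <= T -> (forall s, 0 <= s < t -> P s) -> P t) ->
  forall t, 0 <= t <= T -> P t.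
Proof.
move=> P0 P_right P_left.
have [T_ge0|T_lt0] := leP 0 T; last by move=> t /andP[t0 tT]; lra.
pose S := [set s | 0 <= s <= T /\ forall x, 0 <= x <= s -> P x].
have S0 : S 0.
  split=> [|x x0]; first by rewrite lexx.
  by have -> : x = 0 by apply/eqP; rewrite eq_le andbC.
have supS : has_sup S by split; [exists 0 | exists T => s [/andP[]]].
pose ts := sup S.
have ts_ge0 : 0 <= ts by exact: sup_upper_bound.
have ts_le_T : ts <= T by apply: ge_sup; [exists 0 | move=> s [/andP[]]].
have P_below s : 0 <= s < ts -> P s.
  move=> /andP[s0 s_lt_ts]; have ts_s : 0 < ts - s by rewrite subr_gt0.
  have [y [_ Py] sy] := sup_adherent ts_s supS.
  by apply: Py; rewrite s0 /=; move: sy; rewrite opprB addrC subrK => /ltW.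
have P_ts : P ts.
  have [<-//|ts_neq0] := eqVneq 0 ts.
  by apply: P_left => //; rewrite lt_neqAle ts_neq0 ts_ge0.
have ts_eq_T : ts = T.
  apply/eqP; rewrite eq_le ts_le_T leNgt; apply/negP => ts_lt_T.
  have ts_in : 0 <= ts < T by rewrite ts_ge0.
  have [e e0 Pe] := near_at_right_ball (P_right ts ts_in P_ts).
  have min_gt0 : 0 < Num.min e (T - ts) by rewrite lt_min e0 subr_gt0.
  have min_le_e : Num.min e (T - ts) <= e by rewrite ge_min lexx.
  have min_le_T : Num.min e (T - ts) <= T - ts by rewrite ge_min lexx orbT.
  pose m := Num.min e (T - ts) / 2.
  have [m_gt0 m_lt_e m_le] : [/\ 0 < m, m < e & m <= T - ts] by split; rewrite /m; lra.
  suff : S (ts + m) by move=> /(sup_upper_bound supS); rewrite -/ts; lra.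
  split=> [|x /andP[x0 x_le]]; first by apply/andP; split; lra.
  have [x_lt|ts_le_x] := ltP x ts; first by apply: P_below; rewrite x0 x_lt.
  have [<-//|ts_neq_x] := eqVneq ts x.
  have -> : x = ts + (x - ts) by rewrite addrC subrK.
  apply: Pe; apply/andP; split; last lra.
  by rewrite subr_gt0 lt_neqAle ts_neq_x ts_le_x.
move=> t /andP[t0]; rewrite le_eqVlt => /orP[/eqP->|t_lt_T]; first by rewrite -ts_eq_T.
by apply: P_below; rewrite t0 ts_eq_T.
Qed.

Lemma touching_barrier (rho beta : R -> R) (t k e : R) :
  0 < rho t -> 0 <= k -> 0 < e -> derivable rho t 1 -> - (k * rho t) <= derive1 rho t ->
  (\forall h \near 0^'+, beta (t + h) <= rho t * expR (- ((k + e) * h))) ->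
  \forall h \near 0^'+, beta (t + h) <= rho (t + h).
Proof.
move=> a_gt0 k0 e0 drho rho'_lb beta_le; set a := rho t in a_gt0 rho'_lb beta_le *.
have ea_gt0 : 0 < e * a / 2 by rewrite divr_gt0 // mulr_gt0.
have /cvgrPdist_lt/(_ _ ea_gt0) := cvg_dnbhs_at_right drho.
rewrite -[lim _]/(derive rho t 1) -derive1E => quotient_near.
have ke_gt0 : 0 < (k + e / 2) * (k + e) by rewrite mulr_gt0 //; lra.
near=> h.
have h_gt0 : 0 < h by near: h; exact: nbhs_right_gt.
have h_small : h * ((k + e / 2) * (k + e)) < e / 2.
  by rewrite -ltr_pdivlMr //; near: h; apply: nbhs_right_lt; rewrite divr_gt0 //; lra.
have quotient : `|(rho (t + h) - a) / h - derive1 rho t| < e * a / 2.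
  near: h; apply: filterS quotient_near => h.
  by rewrite /GRing.scale /= mulr1 (addrC h) [_^-1 * _]mulrC distrC.
have rho_lb : a * (1 - (k + e / 2) * h) < rho (t + h).
  have : - (k * a) - e * a / 2 < (rho (t + h) - a) / h.
    by move: quotient => /ltr_normlP[]; lra.
  rewrite ltr_pdivlMr // => ?; nra.
have exp_ge : 1 + (k + e) * h <= expR ((k + e) * h) by exact: expR_ge1Dx.
have ke_h : 0 < 1 + (k + e) * h by rewrite addr_gt0 // mulr_gt0 //; lra.
apply: le_trans (_ : a * (1 + (k + e) * h)^-1 <= _).
  apply: le_trans (_ : a * expR (- ((k + e) * h)) <= _); first by near: h.
  by rewrite expRN ler_pM2l // lef_pV2 ?posrE ?expR_gt0.
rewrite -[leLHS]/(a / _) ler_pdivrMr //.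
have : a * (1 - (k + e / 2) * h) * (1 + (k + e) * h) <= rho (t + h) * (1 + (k + e) * h).
  by rewrite ler_pM2r // ltW.
have : 0 <= a * h * (e / 2 - h * ((k + e / 2) * (k + e))).
  by rewrite mulr_ge0 ?mulr_ge0 ?ltW //; lra.
lra.
Unshelve. all: by end_near. Qed.

End real_line.

Section cumulative_integral.
Variables (R : realType) (T : R) (f : R -> R).
Hypothesis f_ge0 : forall x, 0 <= f x.
Hypothesis f_L2 : L2_0T T f.
Local Notation mu := (@lebesgue_measure R).

Definition cumint (t : R) : R := fine (\int[mu]_(x in I0T t) (f x)%:E).

Let mf : measurable_fun (I0T T) (fun x => (f x)%:E).
Proof. by apply/measurable_EFinP; case: f_L2. Qed.

Lemma integral_itv_lt_pinfty : (\int[mu]_(x in I0T T) (f x)%:E < +oo)%E.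
Proof.
have [mf2 f2_fin] := f_L2.
have mf2E : measurable_fun (I0T T) (fun x => ((f x) ^+ 2)%:E).
  by apply/measurable_EFinP; exact: measurable_funX.
have mI : measurable (I0T T) by exact: measurable_itv.
apply: (@le_lt_trans _ _ (\int[mu]_(x in I0T T) (1 + ((f x) ^+ 2)%:E))%E).
  apply: ge0_le_integral => //.
  - by move=> x _; rewrite lee_fin.
  - by apply: emeasurable_funD => //; exact: measurable_cst.
  - by move=> x _; rewrite -EFinD lee_fin; have := f_ge0 x; nra.
rewrite ge0_integralD //; last by move=> x _; rewrite lee_fin sqr_ge0.
rewrite integral_cst //= lebesgue_measure_itv /= mul1e.
by case: ifP => _; rewrite lte_add_pinfty // ltry.
Qed.

Lemma integral_sub_fin_num (D : set R) : measurable D -> D `<=` I0T T ->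
  (\int[mu]_(x in D) (f x)%:E)%E \is a fin_num.
Proof.
move=> mD DT; rewrite ge0_fin_numE; last by apply: integral_ge0 => x _; rewrite lee_fin.
apply: le_lt_trans integral_itv_lt_pinfty.
apply: ge0_subset_integral => //; first exact: measurable_itv.
by move=> x _; rewrite lee_fin.
Qed.

Lemma cumint_ge0 t : 0 <= cumint t.
Proof. by apply: fine_ge0; apply: integral_ge0 => x _; rewrite lee_fin. Qed.

Lemma cumint_incr_lb a b v : 0 <= a <= b -> b <= T -> 0 <= v ->
  {in `]a, b], forall x, v <= f x} -> cumint a + v * (b - a) <= cumint b.
Proof.
move=> /andP[a0 ab] bT v0 vf.
have sub t : t <= b -> I0T t `<=` I0T T.
  by move=> tb x; rewrite /I0T /= !in_itv /= => /andP[-> xt] /=; lra.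
have ab_sub : `]a, b] `<=` I0T T.
  by move=> x; rewrite /I0T /= !in_itv /= => /andP[ax xb]; apply/andP; split; lra.
have split_b : I0T b = I0T a `|` `]a, b].
  by apply: itv_bndbnd_setU; rewrite bnd_simp.
have disj : [disjoint I0T a & `]a, b]].
  by apply/disj_setPS => x []; rewrite /I0T /= !in_itv /= => /andP[_ xa] /andP[ax _]; lra.
have fin_a := integral_sub_fin_num (measurable_itv _) (sub a ab).
have fin_b := integral_sub_fin_num (measurable_itv _) (sub b (lexx b)).
rewrite -lee_fin /cumint EFinD !fineK //.
rewrite split_b ge0_integral_setU //; try exact: measurable_itv; last 2 first.
- by rewrite -split_b; apply: measurable_funS mf => //; [exact: measurable_itv | exact: sub].
- by move=> x _; rewrite lee_fin.
apply: leeD => //; apply: (@le_trans _ _ (\int[mu]_(x in `]a, b]) v%:E)%E).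
  rewrite integral_cst /=; last exact: measurable_itv.
  rewrite lebesgue_measure_itv /= lte_fin.
  have [_|ba] := ltP a b; first by rewrite -EFinD -EFinM lee_fin mulrC.
  have -> : b = a by apply/le_anti; rewrite ba ab.
  by rewrite subrr mulr0 mule0.
apply: ge0_le_integral => //.
by apply: measurable_funS mf => //; exact: measurable_itv.
Qed.

Lemma cumint_le a b : 0 <= a <= b -> b <= T -> cumint a <= cumint b.
Proof.
move=> ab bT; have := cumint_incr_lb ab bT (lexx 0) (fun x _ => f_ge0 x).
by rewrite mul0r addr0.
Qed.

Lemma cumint_near_right t v : 0 <= t < T -> (\forall x \near t, v <= f x) ->
  \forall h \near 0^'+, cumint t + v * h <= cumint (t + h).
Proof.
move=> /andP[t0 tT] /near_itvoc_right vf; near=> h.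
have h_gt0 : 0 < h by near: h; exact: nbhs_right_gt.
have th_le_T : t + h <= T.
  by rewrite -lerBrDl; near: h; apply: nbhs_right_le; rewrite subr_gt0.
have vp_ge0 : 0 <= Num.max 0 v by rewrite le_max lexx.
have : cumint t + Num.max 0 v * (t + h - t) <= cumint (t + h).
  apply: cumint_incr_lb => //; first by rewrite t0 lerDl ltW.
  by move=> x /(near vf h) vx; rewrite ge_max f_ge0 vx.
apply: le_trans; rewrite addrAC subrr add0r lerD2l (ler_wpM2r (ltW h_gt0)) //.
by rewrite le_max lexx orbT.
Unshelve. all: by end_near. Qed.

End cumulative_integral.

Section flux_bound.
Variables (R : realType) (n N : nat) (r cv e0 : 'I_n -> R).
Implicit Types U UK UL : state R n N.

Lemma vel_le_vnorm U d : `|vel U d| <= vnorm U.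
Proof.
rewrite /vnorm -sqrtr_sqr; apply: ler_wsqrtr.
by rewrite (bigD1 d) //= lerDl; apply: sumr_ge0 => j _; exact: sqr_ge0.
Qed.

Lemma vnorm_le_lamKL UK UL : vnorm UL <= lamKL r cv e0 UK UL.
Proof. by rewrite /lamKL le_max /wspeed lerDl sqrtr_ge0 orbT. Qed.

(* Since lamKL >= |u_L|, the flux is nonincreasing in rho_{i,L}; bound it at rho_{i,L} = rho_{i,K}. *)
Lemma Frho_le_mul UK UL d s i u :
  0 <= srho UK i <= srho UL i -> vnorm UK <= u -> vnorm UL <= u ->
  Frho r cv e0 UK UL d s i <= srho UK i * u.
Proof.
move=> /andP[a_ge0 a_le_b] uK uL; rewrite /Frho /frho.
set a := srho UK i in a_ge0 a_le_b *; set b := srho UL i in a_le_b *.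
set x := vel UK d; set y := vel UL d; set l := lamKL r cv e0 UK UL.
have /ler_normlP[x1 x2] : `|x| <= u := le_trans (vel_le_vnorm UK d) uK.
have /ler_normlP[y1 y2] : `|y| <= u := le_trans (vel_le_vnorm UL d) uL.
have /ler_normlP[l1 l2] : `|y| <= l := le_trans (vel_le_vnorm UL d) (vnorm_le_lamKL UK UL).
case: s; rewrite /sgn.
- have : 0 <= a * (u - x) + a * (u - y) + (b - a) * (l - y).
    by rewrite !addr_ge0 ?mulr_ge0 //; lra.
  lra.
- have : 0 <= a * (u + x) + a * (u + y) + (b - a) * (l + y).
    by rewrite !addr_ge0 ?mulr_ge0 //; lra.
  lra.
Qed.

End flux_bound.

Lemma cell_balance_lb (R : realFieldType) (N : nat) (H rho' B : R) (F : 'I_N -> bool -> R) :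
  0 < H -> (0 < N)%N ->
  H ^+ N * rho' + \sum_(d < N) \sum_(s : bool) H ^+ N.-1 * F d s = 0 ->
  (forall d s, F d s <= B) -> - ((N * 2)%:R * B) / H <= rho'.
Proof.
move=> H_gt0 N_gt0 balance F_le.
have HN : H ^+ N = H ^+ N.-1 * H by rewrite -exprSr prednK.
have HN1_gt0 : 0 < H ^+ N.-1 by exact: exprn_gt0.
have flux_le : \sum_(d < N) \sum_(s : bool) H ^+ N.-1 * F d s <= H ^+ N.-1 * ((N * 2)%:R * B).
  apply: le_trans (_ : \sum_(d < N) \sum_(s : bool) H ^+ N.-1 * B <= _).
    by do 2 apply: ler_sum => ? _; rewrite ler_pM2l.
  rewrite !big_const card_ord card_bool /= iter_addr !addr0 -mulr2n -mulrnA mulnC.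
  by rewrite mulr_natl mulrnAr.
rewrite ler_pdivrMr // -(ler_pM2l HN1_gt0) mulrCA -HN; lra.
Qed.

Section velocity_continuity.
Variables (R : realType) (n N : nat) (U : R -> state R n N) (t : R).
Hypothesis srho_cont : forall i, {for t, continuous (fun x => srho (U x) i)}.
Hypothesis smom_cont : forall j, {for t, continuous (fun x => smom (U x) j)}.

Lemma vnorm_continuous_at : rho_tot (U t) != 0 -> {for t, continuous (fun x => vnorm (U x))}.
Proof.
move=> rho_neq0.
have rho_cont : {for t, continuous (fun x => rho_tot (U x))}.
  by apply: cvg_big => // [|i _]; [exact: add_continuous | exact: srho_cont].
have vel_cont d : {for t, continuous (fun x => vel (U x) d)}.
  by apply: cvgM; [exact: smom_cont | exact: cvgV].
have sum_cont : {for t, continuous (fun x => \sum_(d < N) vel (U x) d ^+ 2)}.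
  by apply: cvg_big => // [|d _]; [exact: add_continuous | apply: cvgM; exact: vel_cont].
by rewrite /vnorm; apply: (continuous_comp sum_cont); exact: sqrt_continuous.
Qed.

Lemma vnorm_lsc e : 0 < e -> \forall x \near t, vnorm (U t) - e <= vnorm (U x).
Proof.
move=> e_gt0; have [rho_eq0|rho_neq0] := eqVneq (rho_tot (U t)) 0.
  (* a state of zero total density has zero velocity, since x / 0 = 0 *)
  have -> : vnorm (U t) = 0.
    by rewrite /vnorm big1 ?sqrtr0 // => d _; rewrite /vel rho_eq0 invr0 mulr0 expr2 mulr0.
  by near=> x; rewrite sub0r (le_trans _ (sqrtr_ge0 _)) // lerNl oppr0 ltW.
have /cvgrPdist_lt/(_ e e_gt0) := vnorm_continuous_at rho_neq0.
by apply: filterS => x /ltr_normlP[_]; lra.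
Unshelve. all: by end_near. Qed.

End velocity_continuity.

Section LF_positivity.
Variables (R : realType) (n N M : nat) (r cv e0 : 'I_n -> R) (T : R).
Variable U : cell M N -> R -> state R n N.
Hypotheses (N_gt0 : (0 < N)%N) (M_gt0 : (0 < M)%N) (T_gt0 : 0 < T).
Hypothesis U_sol : LF_solution r cv e0 T U.
Hypothesis srho0_gt0 : forall K i, 0 < srho (U K 0) i.
Hypothesis uinf_L2 : L2_0T T (uinf U).

Let u := uinf U.

(* c = 2N / h: a cell has 2N faces and |S_KL| / |K| = 1 / h *)
Let c : R := (N * 2)%:R * M%:R.

Let m0 : R := \big[Num.min/1]_(p : cell M N * 'I_n) srho (U p.1 0) p.2.

(* The slack 1 in the exponent makes the barrier decay strictly faster than the
   worst-case rate c u, which absorbs the error of the derivative at a touching point. *)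
Let barrier (t : R) : R := m0 * expR (- (1 + t) - c * cumint u t).

Let above_barrier (t : R) : Prop := forall K i, barrier t <= srho (U K t) i.

Lemma uinf_ge0 t : 0 <= u t.
Proof. exact: bigmax_ge_id. Qed.

Lemma vnorm_le_uinf K t : vnorm (U K t) <= u t.
Proof. exact: le_bigmax. Qed.

Let c_gt0 : 0 < c.
Proof. by rewrite mulr_gt0 // ltr0n // muln_gt0 N_gt0. Qed.

Let m0_gt0 : 0 < m0.
Proof.
by rewrite /m0; apply: (big_ind (fun x => 0 < x)) => // x y x0 y0; rewrite lt_min x0.
Qed.

Lemma barrier_gt0 t : 0 < barrier t.
Proof. by rewrite mulr_gt0 // expR_gt0. Qed.

Lemma barrier_le s t : 0 <= s <= t -> t <= T -> barrier t <= barrier s.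
Proof.
move=> st tT; rewrite ler_pM2l // ler_expR.
have := cumint_le uinf_ge0 uinf_L2 st tT; have /andP[_ s_le_t] := st.
rewrite -(ler_pM2l c_gt0); lra.
Qed.

Lemma barrier0_lt K i : barrier 0 < srho (U K 0) i.
Proof.
have m0_le : m0 <= srho (U K 0) i by exact: (bigmin_le _ (K, i)).
apply: lt_le_trans m0_le; rewrite gtr_pMr // expR_lt1.
have := cumint_ge0 uinf_ge0 0; have := c_gt0; nra.
Qed.

Lemma srho_derive_lb K i t : 0 < t < T -> 0 <= srho (U K t) i ->
  (forall d s, srho (U K t) i <= srho (U (nbr K d s) t) i) ->
  - (c * u t * srho (U K t) i) <= derive1 (fun x => srho (U K x) i) t.
Proof.
move=> tT a_ge0 a_le; have [/(_ i)[_ balance] _] := U_sol.2 K t tT.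
have h_gt0 : 0 < hmesh R M by rewrite invr_gt0 ltr0n.
have := cell_balance_lb h_gt0 N_gt0 balance (B := srho (U K t) i * u t).
have -> : - ((N * 2)%:R * (srho (U K t) i * u t)) / hmesh R M =
          - (c * u t * srho (U K t) i) by rewrite /hmesh invrK /c; ring.
apply=> d s; apply: Frho_le_mul; rewrite ?vnorm_le_uinf //.
by rewrite a_ge0 a_le.
Qed.

Lemma uinf_lsc t e : 0 < t < T -> 0 < e -> \forall x \near t, u t - e <= u x.
Proof.
move=> tT e_gt0.
have cont_at (g : R -> R) : {within `[0, T], continuous g} -> {for t, continuous g}.
  by move=> /(continuous_within_itvP _ T_gt0)[+ _ _]; apply; rewrite in_itv.
have lsc K : \forall x \near t, vnorm (U K t) - e <= vnorm (U K x).
  have [srho_c [smom_c _]] := U_sol.1 K.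
  by apply: vnorm_lsc e_gt0 => [i|j]; apply: cont_at.
apply: filterS (filter_forall _ lsc) => x lsc_x.
rewrite lerBlDr; apply: bigmax_le => [|K _]; first by rewrite addr_ge0 ?uinf_ge0 ?ltW.
by rewrite -lerBlDr (le_trans (lsc_x K)) ?vnorm_le_uinf.
Qed.

Lemma barrier_decay t : 0 < t < T ->
  \forall h \near 0^'+, barrier (t + h) <= barrier t * expR (- ((c * u t + 1 / 2) * h)).
Proof.
move=> tT; have /andP[t_gt0 t_lt_T] := tT.
pose eta := (2 * c)^-1.
have eta_gt0 : 0 < eta by rewrite invr_gt0 mulr_gt0.
have c_eta : c * eta = 1 / 2 by rewrite /eta invfM mulrCA divff ?gt_eqF // mulr1 mul1r.
have := cumint_near_right uinf_ge0 uinf_L2 _ (uinf_lsc tT eta_gt0).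
rewrite (ltW t_gt0) t_lt_T => /(_ isT); apply: filterS => h incr.
rewrite /barrier -mulrA -expRD ler_pM2l // ler_expR.
have := incr; rewrite -(ler_pM2l c_gt0).
have -> : c * (cumint u t + (u t - eta) * h) = c * cumint u t + c * u t * h - c * eta * h by ring.
rewrite c_eta; lra.
Qed.

Lemma above_barrier_right t : 0 <= t < T -> above_barrier t ->
  \forall h \near 0^'+, above_barrier (t + h).
Proof.
move=> tT above_t; apply: filter_forall => K; apply: filter_forall => i.
have := above_t K i; rewrite le_eqVlt => /predU1P[touch|below].
  have t_gt0 : 0 < t.
    rewrite lt_neqAle (andP tT).1 andbT; apply: contraTneq (barrier0_lt K i) => t0.
    by rewrite t0 touch ltxx.
  have tT' : 0 < t < T by rewrite t_gt0 (andP tT).2.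
  have [/(_ i)[srho_d _] _] := U_sol.2 K t tT'.
  apply: (@touching_barrier _ (fun x => srho (U K x) i) _ _ (c * u t) (1 / 2)) => //.
  - by rewrite -touch barrier_gt0.
  - by rewrite mulr_ge0 ?uinf_ge0 ?ltW.
  - apply: srho_derive_lb => //; first by rewrite -touch ltW ?barrier_gt0.
    by move=> d s; rewrite -touch.
  - by rewrite -touch; exact: barrier_decay.
have /(cvgr_gt _) /(_ _ below) := continuous_within_itv_at_right ((U_sol.1 K).1 i) tT.
move=> /near_at_right_shift near_t; near=> h.
apply: (@le_trans _ _ (barrier t)); last by apply: ltW; near: h.
apply: barrier_le; first by rewrite (andP tT).1 lerDl ltW //; near: h; exact: nbhs_right_gt.
by rewrite -lerBrDl; near: h; apply: nbhs_right_le; rewrite subr_gt0 (andP tT).2.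
Unshelve. all: by end_near. Qed.

Lemma above_barrier_left t : 0 < t <= T ->
  (forall s, 0 <= s < t -> above_barrier s) -> above_barrier t.
Proof.
move=> tT above_below K i; have /andP[t_gt0 t_le_T] := tT.
apply: (cvgr_to_ge (continuous_within_itv_at_left ((U_sol.1 K).1 i) tT)).
near=> s.
have s_lt_t : s < t by near: s; exact: nbhs_left_lt.
have s_gt0 : 0 < s by near: s; apply: cvg_within; exact: lt_nbhsr.
apply: le_trans (above_below s _ K i); last by rewrite ltW.
by apply: barrier_le; rewrite // !ltW.
Unshelve. all: by end_near. Qed.

Lemma LF_srho_lower_bound : exists rb : R, 0 < rb /\
  forall K t i, 0 <= t <= T -> rb <= srho (U K t) i.
Proof.
have above : forall t, 0 <= t <= T -> above_barrier t.
  apply: real_induction; last 2 first.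
  - exact: above_barrier_right.
  - exact: above_barrier_left.
  - by move=> K i; exact/ltW/barrier0_lt.
exists (barrier T); split=> [|K t i tT]; first exact: barrier_gt0.
by apply: le_trans (above t tT K i); apply: barrier_le.
Qed.

End LF_positivity.

Theorem theorem3p1 (R : realType) (n N M : nat) (r cv e0 : 'I_n -> R) (T : R)
  (U : cell M N -> R -> state R n N) :
  (1 <= N <= 3)%N -> (0 < n)%N -> (0 < M)%N -> 0 < T ->
  (forall i, 0 < r i) -> (forall i, 0 < cv i) ->
  LF_solution r cv e0 T U ->
  (forall K i, 0 < srho (U K 0) i) ->
  L2_0T T (uinf U) ->
  exists rb : R, 0 < rb /\
    forall (K : cell M N) (t : R) (i : 'I_n), 0 <= t <= T -> rb <= srho (U K t) i.
Proof.
move=> /andP[N_gt0 _] _ M_gt0 T_gt0 _ _ U_sol srho0_gt0 uinf_L2.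
exact: (LF_srho_lower_bound N_gt0 M_gt0 T_gt0 U_sol srho0_gt0 uinf_L2).
Qed.
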